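(* Let $0<V\le1$ and let $$P^{col}_{BB84}(ab|xy)=\frac{1+(-1)^{a\oplus b\oplus x\cdot y}\big[\delta_{x,y}V+\tfrac{1-V}{2}\big]+(-1)^{a\oplus b\oplus x\oplus y}\tfrac{1-V}{2}}{4},\qquad a,b,x,y\in\{0,1\}.$$ In the steering scenario described in the context, the steering cost of $P^{col}_{BB84}$ is $C_{steer}(P^{col}_{BB84})=V$.
   Context: Steering scenario: Alice performs two black-box dichotomic measurements $x\in\{0,1\}$ (outcomes $a\in\{0,1\}$) on her part of an unknown $d\times2$ quantum state $\rho_{AB}$; Bob performs projective qubit measurements in two mutually unbiased bases $\{|f_1\rangle,|f_2\rangle\}$, $\{|g_1\rangle,|g_2\rangle\}$ of $\mathbb{C}^2$ ($|\langle f_i|g_j\rangle|^2=1/2$), with $\Pi_{b|0}=|f_{b+1}\rangle\langle f_{b+1}|$, $\Pi_{b|1}=|g_{b+1}\rangle\langle g_{b+1}|$. Let $\mathcal{N}$ be the set of boxes $p(ab|xy)=\operatorname{Tr}[\Pi_{b|y}\sigma_{a|x}]$ with $\sigma_{a|x}=\operatorname{Tr}_A[(M_{a|x}\otimes\mathbb{1})\rho_{AB}]$ for some such state and POVMs $\{M_{a|x}\}$. A box is unsteerable if $p(ab|xy)=\sum_\lambda p(\lambda)p(a|x,\lambda)\operatorname{Tr}(\Pi_{b|y}\rho_\lambda)$ for some probability distribution $p(\lambda)$, conditional distributions $p(a|x,\lambda)$ and qubit density operators $\rho_\lambda$; otherwise steerable. The steering cost $C_{steer}(P)$ of $P\in\mathcal{N}$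 is the minimum of $p_S\in[0,1]$ over all decompositions $P=p_SP_S+(1-p_S)P_{US}$ with $P_S\in\mathcal{N}$ steerable and $P_{US}$ unsteerable. $\oplus$ is addition modulo 2. *)

From HB Require Import structures.
From mathcomp Require Import all_boot all_order all_algebra.
From mathcomp Require Import reals.
From mathcomp Require Import complex mxtens.

Set Implicit Arguments.
Unset Strict Implicit.
Unset Printing Implicit Defensive.

Import Order.TTheory GRing.Theory Num.Theory.
Local Open Scope ring_scope.
Local Open Scope complex_scope.

Section Steering.
Variable R : realType.
Local Notation C := R[i].

Definition adjmx m n (A : 'M[C]_(m, n)) : 'M[C]_(n, m) := (map_mx Num.conj A)^T.

(* positive semidefinite: <v|A|v> >= 0 for all v (this also forces A Hermitian) *)
Definition psd n (A : 'M[C]_n) : Prop :=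
  forall v : 'cV[C]_n, 0 <= (adjmx v *m A *m v) 0 0.

Definition density n (rho : 'M[C]_n) : Prop := psd rho /\ \tr rho = 1.

Definition povm2 d (M : bool -> bool -> 'M[C]_d) : Prop :=
  forall x, psd (M false x) /\ psd (M true x) /\ M false x + M true x = 1%:M.

Definition idx2 (b : bool) : 'I_2 := if b then ord_max else ord0.

Definition unitary2 (F : 'M[C]_2) : Prop := adjmx F *m F = 1%:M.

Definition MUB (F G : 'M[C]_2) : Prop :=
  unitary2 F /\ unitary2 G /\
  forall i j : 'I_2, `|(adjmx (col i F) *m col j G) 0 0| ^+ 2 = (1 / 2)%:C.

(* Bob's projectors: Pi_{b|0} = |f_{b+1}><f_{b+1}|, Pi_{b|1} = |g_{b+1}><g_{b+1}| *)
Definition bobPi (F G : 'M[C]_2) (b y : bool) : 'M[C]_2 :=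
  let v := col (idx2 b) (if y then G else F) in v *m adjmx v.

(* boxes p(ab|xy), arguments in the order a b x y *)
Definition box := bool -> bool -> bool -> bool -> R.

(* partial trace over Alice (first tensor factor, dimension d) *)
Definition ptraceA d (X : 'M[C]_(d * 2)) : 'M[C]_2 :=
  \matrix_(i, j) \sum_(k < d) X (mxtens_index (k, i)) (mxtens_index (k, j)).

Definition in_N (F G : 'M[C]_2) (P : box) : Prop :=
  exists (d : nat) (rho : 'M[C]_(d * 2)) (M : bool -> bool -> 'M[C]_d),
    density rho /\ povm2 M /\
    forall a b x y,
      (P a b x y)%:C =
      \tr (bobPi F G b y *m ptraceA (tensmx (M a x) (1%:M : 'M[C]_2) *m rho)).

(* unsteerable (LHS) boxes; hidden variable lambda ranging over a finite set *)
Definition unsteerable (F G : 'M[C]_2) (P : box) : Prop :=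
  exists (n : nat) (pl : 'I_n -> R) (q : 'I_n -> bool -> bool -> R)
         (rl : 'I_n -> 'M[C]_2),
    (forall l, 0 <= pl l) /\ \sum_(l < n) pl l = 1 /\
    (forall l x a, 0 <= q l x a) /\ (forall l x, q l x false + q l x true = 1) /\
    (forall l, density (rl l)) /\
    forall a b x y,
      (P a b x y)%:C =
      \sum_(l < n) (pl l * q l x a)%:C * \tr (bobPi F G b y *m rl l).

Definition steerable F G P : Prop := ~ unsteerable F G P.

Definition steer_decomp F G (P : box) (pS : R) : Prop :=
  0 <= pS <= 1 /\
  exists PS PUS : box,
    in_N F G PS /\ steerable F G PS /\ unsteerable F G PUS /\
    forall a b x y, P a b x y = pS * PS a b x y + (1 - pS) * PUS a b x y.

Definition steering_cost_eq F G (P : box) (c : R) : Prop :=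
  steer_decomp F G P c /\ forall pS, steer_decomp F G P pS -> c <= pS.

Definition sgnb (b : bool) : R := if b then -1 else 1.

Definition P_col_BB84 (V : R) : box := fun a b x y =>
  (1 + sgnb (a (+) b (+) (x && y)) * ((if x == y then V else 0) + (1 - V) / 2)
     + sgnb (a (+) b (+) x (+) y) * ((1 - V) / 2)) / 4.

End Steering.

From HB Require Import structures.
From mathcomp Require Import all_boot all_order all_algebra.
From mathcomp Require Import reals.
From mathcomp Require Import complex mxtens spectral sesquilinear.
From mathcomp Require Import ring lra.
Import Order.TTheory GRing.Theory Num.Theory.
Local Open Scope ring_scope.
Local Open Scope sesquilinear_scope.

Set Implicit Arguments.
Unset Strict Implicit.
Unset Printing Implicit Defensive.

(* The box is [V * bb84_box + (1 - V) * noise_box], where [bb84_box] comes from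
   a maximally entangled state on which Alice measures the conjugates of Bob's
   bases, and [noise_box] is a local-hidden-state model sending Bob a uniformly
   random vector of the basis [F]; hence the cost is at most [V].
   Conversely, boxes of [N] are nonnegative, so whenever [pS < 1] the
   unsteerable part of a decomposition inherits the perfect correlations of the
   box in the setting [x = y = 0]. In a local-hidden-state model these force
   every hidden state to be a vector of the basis [F], hence unbiased in the
   basis [G], so its probability of equal outcomes in the setting [x = y = 1] is
   exactly [1/2]. That of the box, [(1 - V)/2], is therefore at least
   [(1 - pS)/2], whence [pS >= V]. *)

Lemma sum_mxtens_index (V : nmodType) m n (h : 'I_(m * n) -> V) :
  \sum_p h p = \sum_(k < m) \sum_(i < n) h (mxtens_index (k, i)).
Proof.
rewrite pair_big (reindex (@mxtens_index m n)) /=; first by apply: eq_bigr => -[].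
by exists (@mxtens_unindex m n) => p _; [apply: mxtens_indexK | apply: mxtens_unindexK].
Qed.

Lemma sum_delta (S : pzSemiRingType) (I : finType) (f : I -> S) k :
  \sum_l (k == l)%:R * f l = f k.
Proof.
rewrite (bigD1 k) //= big1 => [|l /negbTE kl]; first by rewrite eqxx mul1r addr0.
by rewrite eq_sym kl mul0r.
Qed.

Lemma sum_idx2 (V : nmodType) (h : 'I_2 -> V) b :
  \sum_k h k = h (idx2 b) + h (idx2 (~~ b)).
Proof.
rewrite big_ord_recl big_ord1.
by case: b; rewrite /= ?[h ord_max + _]addrC; congr (h _ + h _); apply: val_inj.
Qed.

Lemma idx2_onto (i : 'I_2) : exists b, i = idx2 b.
Proof. by case: i => -[|[|//]] ?; [exists false | exists true]; apply: val_inj. Qed.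

Section Forms.
Variable R : realType.
Local Notation C := R[i].

Definition dotc n (u w : 'cV[C]_n) : C := (adjmx u *m w) 0 0.
Definition form n (A : 'M[C]_n) (u w : 'cV[C]_n) : C := (adjmx u *m A *m w) 0 0.

Lemma adjmxE m n (A : 'M[C]_(m, n)) i j : adjmx A i j = (A j i)^*.
Proof. by rewrite !mxE. Qed.

Lemma adjmxK m n (A : 'M[C]_(m, n)) : adjmx (adjmx A) = A.
Proof. by apply/matrixP => i j; rewrite !adjmxE conjCK. Qed.

Lemma adjmxM m n p (A : 'M[C]_(m, n)) (B : 'M[C]_(n, p)) :
  adjmx (A *m B) = adjmx B *m adjmx A.
Proof.
apply/matrixP => i j; rewrite !mxE rmorph_sum; apply: eq_bigr => k _.
by rewrite !mxE rmorphM mulrC.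
Qed.

Lemma adjmx_trC n (A : 'M[C]_n) : adjmx A = A^t*.
Proof. by apply/matrixP => i j; rewrite !mxE. Qed.

Lemma dotcC n (u w : 'cV[C]_n) : dotc w u = (dotc u w)^*.
Proof. by rewrite /dotc -adjmxE adjmxM adjmxK. Qed.

Lemma form_adj n (A : 'M[C]_n) u w : form (adjmx A) u w = (form A w u)^*.
Proof. by rewrite /form -adjmxE !adjmxM adjmxK mulmxA. Qed.

Lemma formDl n (A : 'M[C]_n) a b u w z :
  form A (a *: u + b *: w) z = a^* * form A u z + b^* * form A w z.
Proof.
rewrite /form; have -> : adjmx (a *: u + b *: w) = a^* *: adjmx u + b^* *: adjmx w.
  by apply/matrixP => i j; rewrite !mxE rmorphD !rmorphM.
by rewrite !mulmxDl -!scalemxAl !mxE.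
Qed.

Lemma formDr n (A : 'M[C]_n) a b u w z :
  form A z (a *: u + b *: w) = a * form A z u + b * form A z w.
Proof. by rewrite /form !mulmxDr -!scalemxAr !mxE. Qed.

Lemma form_delta n (A : 'M[C]_n) i j : form A (delta_mx i 0) (delta_mx j 0) = A i j.
Proof.
rewrite /form; have -> : adjmx (delta_mx i 0 : 'cV[C]_n) = delta_mx 0 i.
  by apply/matrixP => k l; rewrite !mxE rmorph_nat andbC.
by rewrite -rowE -colE !mxE.
Qed.

(* Polarisation with [u = e_i + e_j] and [u = e_i + 'i e_j]. *)
Lemma form_diag_eq0 n (A : 'M[C]_n) : (forall u, form A u u = 0) -> A = 0.
Proof.
move=> A0; apply/matrixP => i j; rewrite mxE.
set ei : 'cV[C]_n := delta_mx i 0; set ej : 'cV[C]_n := delta_mx j 0.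
have := A0 (1 *: ei + 1 *: ej); have := A0 (1 *: ei + 'i *: ej).
rewrite !formDl !formDr !A0 !form_delta rmorph1 conjCi.
rewrite !mul1r !mulr0 !add0r !addr0 => E1 /eqP; rewrite addr_eq0 => /eqP yx.
move: E1; rewrite yx mulrN -mulNr -mulr2n => /eqP.
by rewrite mulrn_eq0 /= mulf_eq0 oppr_eq0 (negbTE (neq0Ci _)) => /eqP ->; rewrite oppr0.
Qed.

Lemma formBl n (A B : 'M[C]_n) u w : form (A - B) u w = form A u w - form B u w.
Proof. by rewrite /form mulmxBr mulmxBl !mxE. Qed.

Lemma psd_adj n (A : 'M[C]_n) : psd A -> adjmx A = A.
Proof.
move=> psdA; apply/eqP; rewrite -subr_eq0; apply/eqP; apply: form_diag_eq0 => u.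
by rewrite formBl form_adj geC0_conj ?subrr //; apply: psdA.
Qed.

Lemma form_psdC n (A : 'M[C]_n) u w : psd A -> form A w u = (form A u w)^*.
Proof. by move=> psdA; rewrite -form_adj psd_adj. Qed.

(* If [s := form A u w] were nonzero, the form at [w - k s u] would be
   [Q - 2 k |s|^2 < 0] for [k] large. *)
Lemma form_psd_null n (A : 'M[C]_n) u w : psd A -> form A u u = 0 -> form A u w = 0.
Proof.
move=> psdA Auu; set s := form A u w; set Q := form A w w.
have [//|s_neq0] := eqVneq s 0.
have Q_real : Q^* = Q by apply: geC0_conj; apply: psdA.
pose z := s * s^*.
have z_neq0 : z != 0 by rewrite mulf_neq0 ?conjC_eq0.
have z_real : z^* = z by apply: geC0_conj; apply: mul_conjC_ge0.
pose k := (Q + 1) / (2 * z).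
have k_real : k^* = k.
  by rewrite /k rmorphM /= fmorphV /= rmorphM /= rmorphD /= Q_real z_real rmorph1 rmorph_nat.
have := psdA (1 *: w + (- (k * s)) *: u).
rewrite -/(form _ _ _) formDl !formDr Auu -/s -/Q (form_psdC _ _ psdA) -/s.
rewrite rmorph1 !mul1r rmorphN rmorphM /= k_real mulr0 addr0.
have -> : Q + - (k * s) * s^* + - (k * s^*) * s = Q - k * z * 2 by rewrite /z; ring.
have -> : k * z * 2 = Q + 1 by rewrite /k; field; rewrite z_neq0.
by rewrite opprD addrA subrr sub0r oppr_ge0 ler10.
Qed.

Lemma psd_conj_mx m n (E : 'M[C]_(m, n)) (A : 'M[C]_m) : psd A -> psd (adjmx E *m A *m E).
Proof. by move=> psdA u; rewrite !mulmxA -adjmxM -!mulmxA mulmxA; apply: psdA. Qed.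

Lemma form_proj n (v u : 'cV[C]_n) : form (v *m adjmx v) u u = `|dotc v u| ^+ 2.
Proof.
rewrite /form !mulmxA -[_ *m adjmx v *m u]mulmxA mxE big_ord1.
by rewrite -/(dotc u v) -/(dotc v u) [dotc u v]dotcC normCK mulrC.
Qed.

Lemma psd_proj n (v : 'cV[C]_n) : psd (v *m adjmx v).
Proof. by move=> u; rewrite -/(form _ _ _) form_proj exprn_ge0. Qed.

Lemma psd_scale n (c : C) (A : 'M[C]_n) : 0 <= c -> psd A -> psd (c *: A).
Proof. by move=> c_ge0 psdA u; rewrite -scalemxAr -scalemxAl mxE mulr_ge0. Qed.

Lemma mxtrace_proj_mul n (v : 'cV[C]_n) (X : 'M[C]_n) : \tr (v *m adjmx v *m X) = form X v v.
Proof. by rewrite -mulmxA mxtrace_mulC trace_mx11. Qed.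

Lemma mxtrace_proj n (v : 'cV[C]_n) : \tr (v *m adjmx v) = dotc v v.
Proof. by rewrite mxtrace_mulC trace_mx11. Qed.

Lemma mxtrace_proj_proj n (v w : 'cV[C]_n) :
  \tr (v *m adjmx v *m (w *m adjmx w)) = `|dotc w v| ^+ 2.
Proof. by rewrite mxtrace_proj_mul form_proj. Qed.

(* Writing [A = P^* diag(d) P] with [P] unitary,
   [\tr (A B) = \sum_i d_i <p_i|B|p_i>] with [d_i = <p_i|A|p_i> >= 0]. *)
Lemma mxtrace_psd_mul n (A B : 'M[C]_n) : psd A -> psd B -> 0 <= \tr (A *m B).
Proof.
move=> psdA psdB.
have /orthomx_spectralP defA : A \is normalmx.
  by apply/normalmxP; rewrite -adjmx_trC psd_adj.
set P := spectralmx A in defA; set d := spectral_diag A in defA.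
have PPt : P *m P^t* = 1%:M by apply/unitarymxP; apply: spectral_unitarymx.
rewrite invmx_unitary ?spectral_unitarymx // in defA.
have diag_form X i : (P *m X *m P^t* ) i i = form X (adjmx (row i P)) (adjmx (row i P)).
  rewrite /form adjmxK !mxE; apply: eq_bigr => k _; rewrite !mxE.
  by congr (_ * _); apply: eq_bigr => l _; rewrite !mxE.
have dE i : d 0 i = (P *m A *m P^t* ) i i.
  by rewrite defA !mulmxA PPt mul1mx -!mulmxA PPt mulmx1 mxE eqxx mulr1n.
have -> : \tr (A *m B) = \tr (diag_mx d *m (P *m B *m P^t* )).
  by rewrite defA -!mulmxA mxtrace_mulC -!mulmxA.
rewrite mul_diag_mx /mxtrace; apply: sumr_ge0 => i _.
by rewrite mxE dE !diag_form; apply: mulr_ge0; [apply: psdA | apply: psdB].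
Qed.

End Forms.

Section UnitaryColumns.
Variable R : realType.
Local Notation C := R[i].
Variables (n : nat) (F : 'M[C]_n).
Hypothesis FF : adjmx F *m F = 1%:M.

Lemma unitary_proj_sum : \sum_k col k F *m adjmx (col k F) = 1%:M.
Proof.
rewrite -(mulmx1C FF); apply/matrixP => i j; rewrite summxE !mxE.
by apply: eq_bigr => k _; rewrite !mxE big_ord1 !mxE.
Qed.

Lemma unitary_dotc i j : dotc (col i F) (col j F) = (i == j)%:R.
Proof.
move/(congr1 (fun A : 'M[C]_n => A i j)): FF; rewrite [in RHS]mxE => <-.
by rewrite /dotc !mxE; apply: eq_bigr => k _; rewrite !mxE.
Qed.

Lemma unitary_expand (g : 'cV[C]_n) : g = \sum_k dotc (col k F) g *: col k F.
Proof.
rewrite -{1}[g]mul1mx -unitary_proj_sum mulmx_suml.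
by apply: eq_bigr => k _; rewrite -mulmxA [adjmx _ *m g]mx11_scalar mul_mx_scalar.
Qed.

Lemma unitary_form_sum (A : 'M[C]_n) : \sum_k form A (col k F) (col k F) = \tr A.
Proof.
under eq_bigr => k _ do rewrite -mxtrace_proj_mul.
by rewrite -raddf_sum /= -mulmx_suml unitary_proj_sum mul1mx.
Qed.

End UnitaryColumns.

Section Qubit.
Variable R : realType.
Local Notation C := R[i].

(* In the basis of [F] the only nonzero entry of [rho] is [form rho f' f' = \tr rho]. *)
Lemma density_form0_col (F rho : 'M[C]_2) b :
  unitary2 F -> density rho ->
  form rho (col (idx2 b) F) (col (idx2 b) F) = 0 ->
  rho = col (idx2 (~~ b)) F *m adjmx (col (idx2 (~~ b)) F).
Proof.
move=> FF [psd_rho tr_rho] rho_f0; set f' := col _ F.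
have rho_f'f' : form rho f' f' = 1.
  by rewrite -tr_rho -(unitary_form_sum FF) (sum_idx2 _ b) rho_f0 add0r.
apply/eqP; rewrite -subr_eq0; apply/eqP; apply: form_diag_eq0 => g.
have defg := unitary_expand FF g; rewrite (sum_idx2 _ b) in defg.
rewrite formBl form_proj normCK.
rewrite {1 2}defg formDl !formDr rho_f0 rho_f'f' !(form_psd_null _ psd_rho rho_f0).
rewrite (form_psdC _ _ psd_rho) (form_psd_null _ psd_rho rho_f0) rmorph0.
by rewrite !(mulr0, addr0, add0r) mulr1 mulrC subrr.
Qed.

Lemma MUB_unbiased (F G rho : 'M[C]_2) b b' : MUB F G -> density rho ->
  \tr (bobPi F G b false *m rho) = 0 -> \tr (bobPi F G b' true *m rho) = (1 / 2)%:C%C.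
Proof.
move=> [FF [_ unbiased]] rho_dens; rewrite /bobPi /= !mxtrace_proj_mul.
move/(density_form0_col FF rho_dens) ->.
by rewrite form_proj -(unbiased (idx2 (~~ b)) (idx2 b')) -/(dotc _ _) dotcC norm_conjC.
Qed.

End Qubit.

Section PartialTrace.
Variable R : realType.
Local Notation C := R[i].

Lemma mxtrace_ptraceA d (B : 'M[C]_2) (X : 'M[C]_(d * 2)) :
  \tr (B *m ptraceA X) = \tr ((1%:M *t B) *m X).
Proof.
have entry k i : ((1%:M *t B) *m X) (mxtens_index (k, i)) (mxtens_index (k, i)) =
    \sum_j B i j * X (mxtens_index (k, j)) (mxtens_index (k, i)).
  rewrite mxE sum_mxtens_index exchange_big; apply: eq_bigr => j _.
  by under eq_bigr => l _ do rewrite tensmxE mxE -mulrA; apply: sum_delta.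
rewrite /mxtrace [RHS]sum_mxtens_index.
under [RHS]eq_bigr => k _ do under eq_bigr => i _ do rewrite entry.
rewrite exchange_big; apply: eq_bigr => i _; rewrite exchange_big mxE.
by apply: eq_bigr => j _; rewrite mxE mulr_sumr.
Qed.

(* The matrix of [1 ⊗ v : C^d -> C^d ⊗ C^2]. *)
Definition idtensc d (v : 'cV[C]_2) : 'M[C]_(d * 2, d) :=
  \matrix_(p, k) (((mxtens_unindex p).1 == k)%:R * v (mxtens_unindex p).2 0).

Lemma idtensc_conj d (v : 'cV[C]_2) (M : 'M[C]_d) :
  idtensc d v *m M *m adjmx (idtensc d v) = M *t (v *m adjmx v).
Proof.
apply/matrixP => p q.
case: (mxtens_indexP p) => k i; case: (mxtens_indexP q) => l j.
have EM m : (idtensc d v *m M) (mxtens_index (k, i)) m = v i 0 * M k m.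
  rewrite mxE; under eq_bigr => m' _ do rewrite mxE mxtens_indexK /= -mulrA.
  by rewrite sum_delta.
rewrite tensmxE !mxE big_ord1 !mxE.
under eq_bigr => m _ do rewrite EM !mxE mxtens_indexK rmorphM /= conjC_nat mulrCA.
by rewrite sum_delta mulrCA mulrA.
Qed.

Definition maxent : 'cV[C]_(2 * 2) :=
  \col_p ((mxtens_unindex p).1 == (mxtens_unindex p).2)%:R.

Definition rho_maxent : 'M[C]_(2 * 2) := (1 / 2)%:C%C *: (maxent *m adjmx maxent).

Lemma density_maxent : density rho_maxent.
Proof.
split; first by apply: psd_scale; [rewrite ler0c; lra | apply: psd_proj].
rewrite mxtraceZ mxtrace_proj /dotc mxE sum_mxtens_index !big_ord_recl !big_ord0 /=.
rewrite !mxE !mxtens_indexK /= !(conjC0, conjC1, mulr0, mul1r, addr0, add0r).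
have -> : (1 + 1 : C) = 2%:R%:C%C by rewrite rmorph_nat.
by rewrite -rmorphM mulVf ?pnatr_eq0 ?rmorph1.
Qed.

Lemma ptraceA_maxent (M : 'M[C]_2) :
  ptraceA ((M *t 1%:M) *m rho_maxent) = (1 / 2)%:C%C *: M^T.
Proof.
have rhoE k' i' k j : rho_maxent (mxtens_index (k', i')) (mxtens_index (k, j)) =
    (1 / 2)%:C%C * ((k' == i')%:R * (k == j)%:R).
  by rewrite !mxE big_ord1 !mxE !mxtens_indexK /= rmorph_nat.
apply/matrixP => i j; rewrite !mxE.
under eq_bigr => k _ do rewrite mxE sum_mxtens_index.
under eq_bigr => k _ do under eq_bigr => k' _ do under eq_bigr => i' _ do rewrite tensmxE rhoE.
rewrite !(sum_idx2 _ false) !mxE.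
have [bi ->] := idx2_onto i; have [bj ->] := idx2_onto j.
by case: bi; case: bj => /=; ring.
Qed.

End PartialTrace.

Section Boxes.
Variable R : realType.
Local Notation C := R[i].
Variables F G : 'M[C]_2.

Lemma mxtrace_bobPi_ge0 (rho : 'M[C]_2) b y : psd rho -> 0 <= \tr (bobPi F G b y *m rho).
Proof. by move=> psd_rho; rewrite /bobPi /= mxtrace_proj_mul; apply: psd_rho. Qed.

(* [P a b x y = \tr (M (1 ⊗ v)^* rho (1 ⊗ v))], a trace of a product of psd matrices. *)
Lemma in_N_ge0 P : in_N F G P -> forall a b x y, 0 <= P a b x y.
Proof.
move=> [d [rho [M [[psd_rho _] [povmM defP]]]]] a b x y.
rewrite -ler0c defP /bobPi /= mxtrace_ptraceA mulmxA tensmx_mul mul1mx mulmx1.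
rewrite -idtensc_conj -!mulmxA mxtrace_mulC -!mulmxA.
apply: mxtrace_psd_mul; last by rewrite mulmxA; apply: psd_conj_mx.
by have [? [? _]] := povmM x; case: a.
Qed.

Lemma unsteerable_ge0 P : unsteerable F G P -> forall a b x y, 0 <= P a b x y.
Proof.
move=> [n [pl [q [rl [pl_ge0 [_ [q_ge0 [_ [rl_dens defP]]]]]]]]] a b x y.
rewrite -ler0c defP; apply: sumr_ge0 => l _.
rewrite mulr_ge0 ?mxtrace_bobPi_ge0 ?ler0c ?mulr_ge0 //.
by have [] := rl_dens l.
Qed.

Lemma unsteerable_corr_half P : MUB F G -> unsteerable F G P ->
  P false true false false = 0 -> P true false false false = 0 ->
  P false false true true + P true true true true = 1 / 2.
Proof.
move=> mub [n [pl [q [rl [pl_ge0 [pl_sum [q_ge0 [q_sum [rl_dens defP]]]]]]]]] P01 P10.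
have psd_rl l : psd (rl l) by have [] := rl_dens l.
have term_ge0 l x a b y : 0 <= (pl l * q l x a)%:C%C * \tr (bobPi F G b y *m rl l).
  by rewrite mulr_ge0 ?mxtrace_bobPi_ge0 ?ler0c ?mulr_ge0.
have unbiased l b : pl l != 0 -> \tr (bobPi F G b true *m rl l) = (1 / 2)%:C%C.
  move=> pl_neq0; have [a qa_neq0] : exists a, q l false a != 0.
    have [q0|] := eqVneq (q l false false) 0; last by exists false.
    by exists true; move: (q_sum l false); rewrite q0 add0r => ->; apply: oner_neq0.
  apply: (MUB_unbiased (b := ~~ a) b mub (rl_dens l)).
  have P_anti : P a (~~ a) false false = 0 by case: a {qa_neq0}.
  move: P_anti => /(congr1 (real_complex R)); rewrite defP rmorph0.
  move=> /(psumr_eq0P (fun l _ => term_ge0 l _ _ _ _)) /(_ l isT) /eqP.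
  by rewrite mulf_eq0 fmorph_eq0 mulf_eq0 (negbTE pl_neq0) (negbTE qa_neq0) => /eqP.
apply: complexI; rewrite rmorphD /= !defP -big_split /=.
have -> : 1 / 2 = \sum_l pl l / 2 by rewrite -mulr_suml pl_sum.
rewrite rmorph_sum; apply: eq_bigr => l _.
have [->|pl_neq0] := eqVneq (pl l) 0.
  by rewrite !mul0r rmorph0 addr0.
by rewrite !unbiased // -mulrDl -rmorphD -mulrDr q_sum mulr1 -rmorphM mul1r.
Qed.

Lemma steer_decomp_lower_bound P pS : MUB F G ->
  P false true false false = 0 -> P true false false false = 0 ->
  steer_decomp F G P pS -> 1 - 2 * (P false false true true + P true true true true) <= pS.
Proof.
move=> mub P01 P10 [/andP[pS_ge0 pS_le1] [PS [PUS [PS_N [_ [PUS_LHS defP]]]]]].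
have PS_ge0 := in_N_ge0 PS_N; have PUS_ge0 := unsteerable_ge0 PUS_LHS.
have pUS_ge0 : 0 <= 1 - pS by rewrite subr_ge0.
have [pS1|pS_neq1] := eqVneq pS 1.
  rewrite !defP pS1 subrr !mul0r !addr0 !mul1r.
  by have := PS_ge0 false false true true; have := PS_ge0 true true true true; lra.
have PUS0 a b : P a b false false = 0 -> PUS a b false false = 0.
  move=> P0; have := mulr_ge0 pS_ge0 (PS_ge0 a b false false).
  have := mulr_ge0 pUS_ge0 (PUS_ge0 a b false false).
  have := defP a b false false; rewrite P0 => ? ? ?.
  have /eqP : (1 - pS) * PUS a b false false = 0 by lra.
  by rewrite mulf_eq0 subr_eq0 eq_sym (negbTE pS_neq1) => /eqP.
have := unsteerable_corr_half mub PUS_LHS (PUS0 _ _ P01) (PUS0 _ _ P10).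
move/(congr1 (fun t => (1 - pS) * t)); rewrite mulrDr !defP.
have := mulr_ge0 pS_ge0 (PS_ge0 false false true true).
have := mulr_ge0 pS_ge0 (PS_ge0 true true true true).
lra.
Qed.

End Boxes.

Section Decomposition.
Variable R : realType.
Local Notation C := R[i].
Variables F G : 'M[C]_2.
Hypothesis mub : MUB F G.

Definition bb84_box : box R := fun a b x y =>
  if x == y then (if b == a (+) x then 1 / 2 else 0) else 1 / 4.

Definition noise_box : box R := fun a b x y =>
  if x || y then 1 / 4 else if a == b then 1 / 2 else 0.

Lemma P_col_BB84_decomp V a b x y :
  P_col_BB84 V a b x y = V * bb84_box a b x y + (1 - V) * noise_box a b x y.
Proof.
by case: a; case: b; case: x; case: y; rewrite /P_col_BB84 /bb84_box /noise_box /sgnb /=; lra.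
Qed.

Local Notation basis y := (if y then G else F).

Lemma MUB_overlap x y i j :
  `|dotc (col i (basis x)) (col j (basis y))| ^+ 2 =
  (if x == y then (i == j)%:R else 1 / 2)%:C%C.
Proof.
have [FF [GG unbiased]] := mub.
have unit_overlap X : unitary2 X -> `|dotc (col i X) (col j X)| ^+ 2 = (i == j)%:R.
  by move=> XX; rewrite unitary_dotc //; case: eqP; rewrite ?normr1 ?normr0 ?expr1n ?expr0n.
case: x; case: y => /=; rewrite ?unit_overlap ?rmorph_nat //; last exact: unbiased.
by rewrite dotcC norm_conjC; apply: unbiased.
Qed.

Lemma noise_box_unsteerable : unsteerable F G noise_box.
Proof.
have [FF _] := mub.
pose q (l : 'I_2) (x a : bool) : R := if x then 1 / 2 else (idx2 a == l)%:R.
exists 2, (fun _ => 1 / 2), q, (fun l => col l F *m adjmx (col l F)).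
split; first by move=> l; lra.
split; first by rewrite big_ord_recl big_ord1; lra.
split; first by move=> l [] a; rewrite /q //; lra.
split; first by move=> l []; rewrite /q; [lra | case: l => -[|[|//]] ? /=; rewrite ?addr0 ?add0r].
split; first by move=> l; split; [exact: psd_proj | rewrite mxtrace_proj unitary_dotc ?eqxx].
move=> a b x y; rewrite /bobPi /=.
under eq_bigr => l _ do rewrite mxtrace_proj_proj (MUB_overlap false).
rewrite big_ord_recl big_ord1 -!rmorphM -rmorphD; congr (_%:C%C).
by case: a; case: b; case: x; case: y; rewrite /noise_box /q /=; lra.
Qed.

(* By [ptraceA_maxent], outcome [a] of setting [x] steers Bob onto the vector
   [a (+) x] of [basis x]. *)
Definition alice_meas (a x : bool) : 'M[C]_2 :=
  let v := col (idx2 (a (+) x)) (basis x) in (v *m adjmx v)^T.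

Lemma alice_meas_povm : povm2 alice_meas.
Proof.
have [FF [GG _]] := mub.
have trmx_proj (v : 'cV[C]_2) : (v *m adjmx v)^T = map_mx Num.conj v *m adjmx (map_mx Num.conj v).
  by apply/matrixP => i j; rewrite !mxE !big_ord1 !mxE conjCK mulrC.
move=> x; rewrite /alice_meas /=; split; first by rewrite trmx_proj; apply: psd_proj.
split; first by rewrite trmx_proj; apply: psd_proj.
rewrite -linearD /= -(sum_idx2 (fun k => col k (basis x) *m adjmx (col k (basis x)))).
by rewrite unitary_proj_sum ?trmx1 //; case: x.
Qed.

Lemma bb84_box_in_N : in_N F G bb84_box.
Proof.
exists 2%N, (rho_maxent R), alice_meas.
split; first exact: density_maxent.
split=> [|a b x y]; first exact: alice_meas_povm.
rewrite ptraceA_maxent trmxK -scalemxAr mxtraceZ /bobPi /= mxtrace_proj_proj MUB_overlap.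
rewrite -rmorphM; congr (_%:C%C).
by case: a; case: b; case: x; case: y; rewrite /bb84_box /=; lra.
Qed.

Lemma bb84_box_steerable : steerable F G bb84_box.
Proof.
by move=> /(unsteerable_corr_half mub); rewrite /bb84_box /= => /(_ erefl erefl); lra.
Qed.

End Decomposition.

Theorem corollary2 (R : realType) (F G : 'M[R[i]]_2) (V : R) :
  MUB F G -> 0 < V <= 1 ->
  steering_cost_eq F G (P_col_BB84 V) V.
Proof.
move=> mub /andP[V_gt0 V_le1].
have P01 : P_col_BB84 V false true false false = 0 by rewrite /P_col_BB84 /sgnb /=; lra.
have P10 : P_col_BB84 V true false false false = 0 by rewrite /P_col_BB84 /sgnb /=; lra.
split.
  split; first by rewrite ltW.
  exists (bb84_box R), (noise_box R); split; first exact: bb84_box_in_N.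
  split; first exact: bb84_box_steerable.
  split; first exact: noise_box_unsteerable.
  exact: P_col_BB84_decomp.
move=> pS /(steer_decomp_lower_bound mub P01 P10).
by rewrite /P_col_BB84 /sgnb /=; lra.
Qed.
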